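(* Let $n,k,r,\ell$ be positive integers. Then \[S_{\geq \ell}(n,k,r)=\sum_{i=\ell-1}^{n-1}\binom{n-1}{i}\Big((k-1)\,S_{\geq \ell}(n-i-1,k-1,r)+S_{\geq \ell}(n-i-1,k,r-1)\Big),\] where the term $(k-1)S_{\geq \ell}(n-i-1,k-1,r)$ is $0$ when $k=1$.
   Context: For integers $N\ge 0$, $k\ge1$, $r\ge 0$, $\ell\ge1$, $S_{\geq \ell}(N,k,r)$ is the number of ways to partition $[N]=\{1,\dots,N\}$ into $r+k-1$ non-empty blocks, each of size at least $\ell$, where $r$ of the blocks receive the label $1$ (blocks with label $1$ are indistinguishable among themselves) and the remaining $k-1$ blocks receive the distinct labels $2,3,\dots,k$. (In particular $S_{\geq\ell}(0,1,0)=1$.) *)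

From mathcomp Require Import all_boot.
Set Implicit Arguments. Unset Strict Implicit. Unset Printing Implicit Defensive.

(* Sge l N k r = S_{>= l}(N,k,r): the number of pairs (P, L) where
   - P is a set partition of [N] = 'I_N (blocks non-empty, pairwise disjoint,
     covering) into exactly r + (k-1) blocks, each of size >= l;
   - L assigns to each of the labels 2,...,k (indexed by 'I_(k-1)) a distinct
     block of P (L injective, values in P).
   The remaining r blocks of P are those labelled 1 (indistinguishable).
   Only meaningful for k >= 1 (k.-1 = k - 1). *)
Definition Sge (l N k r : nat) : nat :=
  #|[set PL : {set {set 'I_N}} * {ffun 'I_k.-1 -> {set 'I_N}} |
      [&& partition PL.1 [set: 'I_N],
          [forall B in PL.1, l <= #|B|],
          #|PL.1| == r + k.-1,
          injectiveb PL.2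
        & [forall j, PL.2 j \in PL.1]]]|.

(* Choosing the labels 2..k is an injection of 'I_(k-1) into the blocks, so
   S_{>=l}(n,k,r) = p(n, c) * c^_(k-1) where c = r + k - 1 and p(n, c) counts the
   partitions of an n-set into c blocks of size >= l.  Classifying partitions by
   the block of a fixed point, of size i+1 >= l, gives
   p(n, c) = sum_i C(n-1, i) p(n-i-1, c-1), and the falling-factorial Pascal rule
   c^_(k-1) = (k-1) (c-1)^_(k-2) + (c-1)^_(k-1) splits this into the two terms. *)

From mathcomp Require Import all_boot zify.
Set Implicit Arguments. Unset Strict Implicit. Unset Printing Implicit Defensive.

Lemma ffactS n m : n.+1 ^_ m = m * n ^_ m.-1 + n ^_ m.
Proof.
case: m => [|m] //; rewrite ffactSS ffactnSr.
have [le_mn | lt_nm] := leqP m n; last by rewrite (ffact_small lt_nm) !muln0.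
by rewrite [_ ^_ m * _]mulnC -mulnDl addSn subnKC.
Qed.

Lemma notin_partition_setD (T : finType) (P : {set {set T}}) (D B : {set T}) :
  B != set0 -> partition P (D :\: B) -> B \notin P.
Proof.
move=> nzB partP; apply: contra nzB => BP.
move: (partitionS partP BP); rewrite subsetD => /andP[_].
by rewrite -setI_eq0 setIid.
Qed.

Lemma partition_setU1D (T : finType) (P : {set {set T}}) (D B : {set T}) :
  B \subset D -> B != set0 -> partition P (D :\: B) -> partition (B |: P) D.
Proof.
move=> sBD nzB partP; have <- : B :|: (D :\: B) = D by rewrite -{1}(setIidPr sBD) setID.
by apply: partitionU1; rewrite // disjoints_subset setDE setCI setCK subsetUr.
Qed.

Lemma card_subsets_through (T : finType) (D : {set T}) x0 i : x0 \in D ->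
  #|[set B : {set T} | [&& B \subset D, x0 \in B & #|B| == i.+1]]| = 'C(#|D|.-1, i).
Proof.
move=> Dx0; rewrite (cardsD1 x0 D) Dx0 add1n -cards_draws.
have x0A (A : {set T}) : A \subset D :\ x0 -> x0 \notin A.
  by move=> sA; apply/negP => /(subsetP sA); rewrite !inE eqxx.
rewrite -[RHS](@card_in_imset _ _ (fun A => x0 |: A)); last first.
  move=> A1 A2; rewrite !inE => /andP[sA1 _] /andP[sA2 _] eqA.
  by rewrite -(setU1K (x0A _ sA1)) eqA setU1K ?x0A.
apply: eq_card => B; rewrite inE; apply/idP/imsetP => [/and3P[sBD Bx0 /eqP cB] | [A]].
  exists (B :\ x0); last by rewrite setD1K.
  by rewrite inE setSD //=; move: cB; rewrite (cardsD1 x0) Bx0 add1n => -[->].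
rewrite inE => /andP[sA /eqP cA] ->.
rewrite setU11 cardsU1 x0A // cA eqxx andbT /=.
by rewrite -(setD1K Dx0) setUS.
Qed.

Section PartitionsGe.
Variable l : nat.

Definition partitions_ge (T : finType) (D : {set T}) (c : nat) : {set {set {set T}}} :=
  [set P : {set {set T}} | [&& partition P D, [forall B in P, l <= #|B|] & #|P| == c]].

Definition blocks_through (T : finType) (D : {set T}) (x0 : T) : {set {set T}} :=
  [set B : {set T} | [&& B \subset D, x0 \in B & l <= #|B|]].

(* [i.+1] is the size of the block containing a distinguished point. *)
Fixpoint npartitions_ge (c N : nat) : nat :=
  match c, N with
  | 0, _ => N == 0
  | _.+1, 0 => 0
  | c'.+1, N'.+1 => \sum_(l.-1 <= i < N) 'C(N', i) * npartitions_ge c' (N' - i)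
  end.

Variable T : finType.
Implicit Types (D B : {set T}) (P : {set {set T}}).

Lemma pblock_blocks_through D x0 P c :
  x0 \in D -> P \in partitions_ge D c -> pblock P x0 \in blocks_through D x0.
Proof.
rewrite !inE => Dx0 /and3P[partP /forallP geP _].
have Px0 : pblock P x0 \in P by rewrite pblock_mem ?(cover_partition partP).
by rewrite (partitionS partP Px0) mem_pblock (cover_partition partP) Dx0 (implyP (geP _)).
Qed.

Lemma card_partitions_ge_pblock D x0 B c : B \in blocks_through D x0 ->
  #|[set P in partitions_ge D c.+1 | pblock P x0 == B]| = #|partitions_ge (D :\: B) c|.
Proof.
rewrite inE => /and3P[sBD Bx0 geB]; have nzB : B != set0 by apply/set0Pn; exists x0.
rewrite -[RHS](@card_in_imset _ _ (fun P => B |: P)); last first.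
  move=> P1 P2; rewrite !inE => /and3P[part1 _ _] /and3P[part2 _ _] eqP12.
  rewrite -(setU1K (notin_partition_setD nzB part1)) eqP12.
  by rewrite setU1K // (notin_partition_setD nzB part2).
apply: eq_card => P; rewrite !inE; apply/idP/imsetP => [|[Q]].
  case/andP=> /and3P[partP /forallP geP /eqP cardP] /eqP pbP.
  have PB : B \in P by rewrite -pbP pblock_mem // (cover_partition partP) (subsetP sBD).
  exists (P :\ B); last by rewrite setD1K.
  rewrite !inE partitionD1 //=; apply/andP; split.
    by apply/forallP => C; apply/implyP => /setD1P[_ /(implyP (geP C))].
  by move: cardP; rewrite (cardsD1 B P) PB add1n => -[->].
rewrite inE => /and3P[partQ /forallP geQ /eqP cardQ] ->.
have partBQ := partition_setU1D sBD nzB partQ.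
rewrite partBQ cardsU1 (notin_partition_setD nzB partQ) cardQ eqxx andbT /=.
rewrite (def_pblock (partition_trivIset partBQ) (setU11 B Q) Bx0) eqxx andbT.
by apply/forallP => C; apply/implyP => /setU1P[-> | /(implyP (geQ C))].
Qed.

Lemma card_partitions_geS D x0 c : x0 \in D ->
  #|partitions_ge D c.+1| = \sum_(B in blocks_through D x0) #|partitions_ge (D :\: B) c|.
Proof.
move=> Dx0; rewrite -sum1_card (partition_big (pblock^~ x0) (mem (blocks_through D x0))).
  by apply: eq_bigr => B /card_partitions_ge_pblock <-; rewrite -sum1dep_card.
by move=> P; apply: pblock_blocks_through.
Qed.

Lemma sum_blocks_through D x0 (F : nat -> nat) : x0 \in D ->
  \sum_(B in blocks_through D x0) F #|B| =
  \sum_(l.-1 <= i < #|D|) 'C(#|D|.-1, i) * F i.+1.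
Proof.
move=> Dx0.
transitivity (\sum_(B in blocks_through D x0) \sum_(l.-1 <= i < #|D| | #|B| == i.+1) F i.+1).
  apply: eq_bigr => B; rewrite inE => /and3P[sBD Bx0 geB].
  have cardB : 0 < #|B| <= #|D|.
    by rewrite subset_leq_card // andbT; apply/card_gt0P; exists x0.
  rewrite (eq_bigl (fun i => i == #|B|.-1)) => [|i]; last by apply/eqP/eqP; lia.
  by rewrite big_nat1_eq ifT; [congr F; lia | lia].
rewrite (exchange_big_dep predT) //=; apply: eq_big_nat => i /andP[lei _].
rewrite sum_nat_const -(card_subsets_through i Dx0); congr (_ * _).
apply: eq_card => B; rewrite unfold_in !inE; case: (B \subset D) (x0 \in B) => [] [] //=.
by case: eqP => [-> | _]; rewrite ?andbF ?andbT //; lia.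
Qed.

Lemma card_partitions_ge0 D : #|partitions_ge D 0| = (D == set0).
Proof.
have [-> | nzD] := eqVneq D set0.
  apply: (eq_card1 (x := set0)) => P; rewrite !inE partition_set0.
  apply/idP/eqP => [/and3P[/eqP //] | ->]; rewrite cards0 eqxx andbT /=.
  by apply/forallP => B; rewrite inE.
apply: eq_card0 => P; rewrite !inE; apply/negP => /and3P[partP _ /eqP/cards0_eq P0].
by move: nzD; rewrite -(cover_partition partP) P0 /cover big_set0 eqxx.
Qed.

Lemma card_partitions_ge_set0 c : #|partitions_ge (set0 : {set T}) c.+1| = 0.
Proof.
apply: eq_card0 => P; rewrite !inE partition_set0.
by apply/negP => /and3P[/eqP -> _]; rewrite cards0.
Qed.

Lemma card_partitions_ge D c : #|partitions_ge D c| = npartitions_ge c #|D|.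
Proof.
elim: c D => [|c IHc] D; first by rewrite card_partitions_ge0 /= cards_eq0.
have [-> | [x0 Dx0]] := set_0Vmem D; first by rewrite card_partitions_ge_set0 cards0.
have [N cardD] : exists N, #|D| = N.+1.
  by exists #|D|.-1; rewrite prednK // card_gt0; apply/set0Pn; exists x0.
rewrite (card_partitions_geS _ Dx0).
transitivity (\sum_(B in blocks_through D x0) npartitions_ge c (#|D| - #|B|)).
  apply: eq_bigr => B; rewrite inE => /and3P[sBD _ _].
  by rewrite IHc cardsD (setIidPr sBD).
rewrite (sum_blocks_through (fun s => npartitions_ge c (#|D| - s)) Dx0) cardD /=.
by apply: eq_bigr => i _; rewrite subSS.
Qed.

End PartitionsGe.

Lemma Sge_npartitions_ge l N k r :
  Sge l N k r = npartitions_ge l (r + k.-1) N * (r + k.-1) ^_ k.-1.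
Proof.
rewrite -{2}(card_ord N) -cardsT -card_partitions_ge.
rewrite /Sge -sum1_card; set S := [set _ | _].
rewrite (eq_bigl (fun PL => predT PL.1 && (PL.2 \in [set L | (PL.1, L) \in S]))); last first.
  by move=> PL; rewrite [in RHS]inE /= -surjective_pairing.
rewrite -(pair_big_dep predT (fun P L => L \in [set L | (P, L) \in S]) (fun _ _ => 1)) /=.
rewrite -sum1_card big_distrl /= [RHS]big_mkcond /=; apply: eq_bigr => P _.
rewrite sum1_card inE; case: ifPn => [/and3P[partP geP /eqP cardP] | notP].
  rewrite mul1n -cardP -[k.-1 in RHS]card_ord -card_inj_ffuns_on.
  by apply: eq_card => L; rewrite !inE /= partP geP cardP eqxx /= andbC.
apply: eq_card0 => L; rewrite !inE /=; apply: contraNF notP.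
by case/and5P=> -> -> -> _ _.
Qed.

Theorem mainTheorem8 (n k r l : nat) :
  0 < n -> 0 < k -> 0 < r -> 0 < l ->
  Sge l n k r =
  \sum_(l.-1 <= i < n)
     'C(n.-1, i) * ((k.-1) * Sge l (n - i - 1) k.-1 r + Sge l (n - i - 1) k r.-1).
Proof.
case: n => // N _; case: k => // k _; case: r => // r _ _ /=.
have SgeE M : Sge l M k.+1 r = npartitions_ge l (r + k) M * (r + k) ^_ k.
  exact: Sge_npartitions_ge.
have mulSgeE M : k * Sge l M k r.+1 = k * (npartitions_ge l (r + k) M * (r + k) ^_ k.-1).
  by case: k {SgeE} => [|m] //; rewrite Sge_npartitions_ge addSnnS.
rewrite Sge_npartitions_ge /= addSn big_distrl; apply: eq_bigr => i _.
by rewrite -subnDA addn1 subSS SgeE mulSgeE ffactS /= -mulnA mulnDr mulnCA.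
Qed.
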